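(* Let $\alpha,\beta,\gamma\ge0$ with $\alpha(\beta+\gamma)>0$. Then for every $\theta\in(0,2\pi)$ both roots $\lambda\in\mathbb C$ of $$\lambda^2+\gamma\lambda+\beta\lambda(1-e^{i\theta})+\alpha(2-e^{i\theta}-e^{-i\theta})=0$$ have strictly negative real part.
   Context: This is the characteristic equation of the linearised car-following system $\ddot s_n=-\gamma\dot s_n+\beta(\dot s_{n+1}-\dot s_n)+\alpha(s_{n+1}-2s_n+s_{n-1})$ on a ring (optimal velocity function constant), obtained from the ansatz $s_n=\xi e^{\lambda t}e^{in\theta}$. *)

From mathcomp Require Import all_boot all_algebra.
From mathcomp Require Import reals trigo.
From mathcomp Require Export complex.
Import GRing.Theory Num.Theory.
Local Open Scope ring_scope.
Local Open Scope complex_scope.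

Definition expi {R : realType} (t : R) : R[i] := (cos t +i* sin t).

Definition reC {R : realType} (z : R[i]) : R := complex.Re z.

Definition charEq {R : realType} (alpha beta gamma theta : R) (lam : R[i]) : R[i] :=
  lam ^+ 2 + gamma%:C * lam + beta%:C * lam * (1 - expi theta)
  + alpha%:C * (2%:R - expi theta - expi (- theta)).

(* After the substitution c = cos theta, s = sin theta the equation reads
   lam^2 + b lam + r = 0 with Re b = gamma + beta (1 - c) > 0 and
   r = 2 alpha (1 - c) > 0, since c < 1 on (0, 2 pi).  For such a quadratic,
   multiplying by the conjugate of a root z gives
   Re z (|z|^2 + r) = - Re b |z|^2, and z <> 0 because r <> 0, so Re z < 0. *)
From mathcomp Require Import all_boot all_algebra.
From mathcomp Require Import reals trigo.
From mathcomp Require Import complex.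
From mathcomp Require Import ring lra.
Set Implicit Arguments.
Unset Strict Implicit.
Import GRing.Theory Num.Theory.
Local Open Scope ring_scope.

Lemma quadratic_root_Re_lt0 (R : rcfType) (b : R[i]) (r : R) (z : R[i]) :
  0 < complex.Re b -> 0 < r -> z ^+ 2 + b * z + r%:C%C = 0 -> complex.Re z < 0.
Proof.
case: b z => p q [x y] /= hp hr.
rewrite expr2 => /eqP; rewrite eq_complex /= => /andP[/eqP hRe /eqP hIm].
have conj_identity : x * (x ^+ 2 + y ^+ 2 + r) = - p * (x ^+ 2 + y ^+ 2).
  apply/eqP; rewrite -subr_eq0; apply/eqP.
  transitivity (x * (x * x - y * y + (p * x - q * y) + r)
                + y * (x * y + y * x + (p * y + q * x) + 0)); first by ring.
  by rewrite hRe hIm; ring.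
have z_neq0 : 0 < x ^+ 2 + y ^+ 2.
  rewrite lt0r addr_ge0 ?sqr_ge0 // andbT paddr_eq0 ?sqr_ge0 // !sqrf_eq0.
  by apply/negP => /andP[/eqP x0 /eqP y0]; move: hRe; rewrite x0 y0; lra.
have [//|hx] := ltrP x 0.
have : 0 <= x * (x ^+ 2 + y ^+ 2 + r) by apply: mulr_ge0; lra.
have : 0 < p * (x ^+ 2 + y ^+ 2) by apply: mulr_gt0.
by rewrite conj_identity mulNr; lra.
Qed.

Lemma cos_lt1 (R : realType) (theta : R) : 0 < theta < 2 * pi -> cos theta < 1.
Proof.
move=> /andP[h0 h1].
have -> : theta = (theta / 2) *+ 2 by rewrite mulr2n; lra.
have sin_half_gt0 : 0 < sin (theta / 2) by apply: sin_gt0_pi; lra.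
rewrite cos_mulr2n cos2sin2.
have : 0 < sin (theta / 2) ^+ 2 by rewrite exprn_gt0.
lra.
Qed.

Lemma charEq_quadratic (R : realType) (alpha beta gamma theta : R) (lam : R[i]) :
  charEq alpha beta gamma theta lam =
  lam ^+ 2 + ((gamma + beta * (1 - cos theta)) +i* (- beta * sin theta))%C * lam
  + (2 * alpha * (1 - cos theta))%:C%C.
Proof.
case: lam => x y; rewrite /charEq /expi cosN sinN !expr2.
by apply/eqP; rewrite eq_complex /=; apply/andP; split; apply/eqP; ring.
Qed.

Theorem mainTheorem7 (R : realType) (alpha beta gamma : R) :
  0 <= alpha -> 0 <= beta -> 0 <= gamma -> 0 < alpha * (beta + gamma) ->
  forall theta : R, 0 < theta < 2 * pi ->
  forall lam : R[i], charEq alpha beta gamma theta lam = 0 -> reC lam < 0.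
Proof.
move=> ha hb hg hab theta htheta lam; rewrite charEq_quadratic => hlam.
have hc := cos_lt1 htheta.
have alpha_gt0 : 0 < alpha.
  by rewrite lt0r ha andbT; apply: contraTneq hab => ->; rewrite mul0r lt0r eqxx.
have beta_gamma_gt0 : 0 < beta + gamma by move: hab; rewrite pmulr_rgt0.
apply: (quadratic_root_Re_lt0 _ _ hlam) => /=; last by apply: mulr_gt0; lra.
have [beta_gt0|beta_le0] := ltrP 0 beta.
  have : 0 < beta * (1 - cos theta) by apply: mulr_gt0; lra.
  lra.
have -> : beta = 0 by lra.
rewrite mul0r addr0; lra.
Qed.
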